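(* For $k=2$, $\Theta_2$ equals the support of $\nu_2$.
   Context: Take $k=2$. For a permutation $\tau$ of $\{0,1,2\}$ and $c=(c_1,c_2)\in(0,\infty)^2$: $E_{\tau,i}=\{j\in\{1,2\}:\min(\tau(j-1),\tau(j))<i\le\max(\tau(j-1),\tau(j))\}$, $F_{\tau,i}(c)=\sum_{j\in E_{\tau,i}}\sqrt{2c_j}$, $F_\tau=(F_{\tau,1},F_{\tau,2})$, $w_\tau(c)=\frac14\prod_{i=1}^2\sqrt{2c_i}/F_{\tau,i}(c)$. Explicitly, writing $s_i=\sqrt{2c_i}$: $F_{(0,1,2)}=(s_1,s_2)$, $w=1/4$; $F_{(0,2,1)}=(s_1,s_1+s_2)$, $w=\frac14 s_2/(s_1+s_2)$; $F_{(1,0,2)}=(s_1+s_2,s_2)$, $w=\frac14 s_1/(s_1+s_2)$; $F_{(1,2,0)}=(s_2,s_1+s_2)$, $w=\frac14 s_1/(s_1+s_2)$; $F_{(2,0,1)}=(s_1+s_2,s_1)$, $w=\frac14 s_2/(s_1+s_2)$; $F_{(2,1,0)}=(s_2,s_1)$, $w=1/4$ (here $\tau$ is written as $(\tau(0),\tau(1),\tau(2))$). $Q$ is the Markov kernel $Q(c,\cdot)=\sum_\tau w_\tau(c)\delta_{F_\tau(c)}$. For any probability $\nu^{(0)}$ supported in $[2,8]^2$, $\nu^{(0)}Q^n$ converges weakly to a probability $\nu_2$ independent of $\nu^{(0)}$. Let $\Theta^{(0)}=[2,8]^2$, $\Theta^{(n)}=\bigcup_\tau F_\tau(\Theta^{(n-1)})$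 (a nonincreasing sequence of nonempty compact sets), and $\Theta_2=\bigcap_n\Theta^{(n)}$. *)

From HB Require Import structures.
From mathcomp Require Import all_boot all_order all_algebra all_fingroup.
From mathcomp Require Import all_classical all_reals all_analysis.
Set Implicit Arguments. Unset Strict Implicit. Unset Printing Implicit Defensive.
Import Order.TTheory GRing.Theory Num.Theory.
Import numFieldNormedType.Exports.
Local Open Scope classical_set_scope.
Local Open Scope ring_scope.

Section Defs.
Variable R : realType.

Definition coord (c : R * R) (j : nat) : R := if j == 1%N then c.1 else c.2.
Definition sj (c : R * R) (j : nat) : R := Num.sqrt (2 * coord c j).
Definition tv (tau : 'S_3) (j : nat) : nat := nat_of_ord (tau (inord j)).
Definition inE (tau : 'S_3) (i j : nat) : bool :=
  (minn (tv tau j.-1) (tv tau j) < i <= maxn (tv tau j.-1) (tv tau j))%N.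
Definition Fi (tau : 'S_3) (c : R * R) (i : nat) : R :=
  \sum_(1 <= j < 3 | inE tau i j) sj c j.
Definition Ftau (tau : 'S_3) (c : R * R) : R * R := (Fi tau c 1, Fi tau c 2).
Definition wtau (tau : 'S_3) (c : R * R) : R :=
  4^-1 * \prod_(1 <= i < 3) (sj c i / Fi tau c i).

(* action of the kernel Q on functions: (Q f)(c) = sum_tau w_tau(c) f(F_tau(c)),
   so that  \int f d(nu Q) = \int (Q f) d nu. *)
Definition Qop (f : R * R -> R) (c : R * R) : R :=
  \sum_(tau : 'S_3) wtau tau c * f (Ftau tau c).
Definition Qpow (n : nat) (f : R * R -> R) : R * R -> R := iter n Qop f.

Definition Theta0 : set (R * R) := [set c | 2 <= c.1 <= 8 /\ 2 <= c.2 <= 8].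
Fixpoint Theta (n : nat) : set (R * R) :=
  match n with
  | 0%N => Theta0
  | n'.+1 => \bigcup_(tau in [set: 'S_3]) (Ftau tau @` Theta n')
  end.
Definition Theta2 : set (R * R) := \bigcap_(n in [set: nat]) Theta n.

Definition msupport (mu : set (R * R) -> \bar R) : set (R * R) :=
  [set x | forall U : set (R * R), open U -> U x -> (0 < mu U)%E].

Definition bdd_cont (f : R * R -> R) : Prop :=
  continuous f /\ exists M : R, forall x, `|f x| <= M.

Definition weak_lim_Qn (nu0 nu : probability (R * R)%type R) : Prop :=
  forall f : R * R -> R, bdd_cont f ->
    (fun n => (\int[nu0]_x (Qpow n f x)%:E)%E) @ \oo --> (\int[nu]_x (f x)%:E)%E.

End Defs.

From Pilot Require Import Defs.
From HB Require Import structures.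
From mathcomp Require Import all_boot all_order all_algebra all_fingroup.
From mathcomp Require Import all_classical all_reals all_analysis.
From mathcomp Require Import ring lra.
Import Order.TTheory GRing.Theory Num.Theory.
Import numFieldNormedType.Exports.
Set Implicit Arguments. Unset Strict Implicit. Unset Printing Implicit Defensive.
Local Open Scope classical_set_scope.
Local Open Scope ring_scope.

(* On [Theta0] every map [F_tau] sends [Theta0] into itself, every weight [w_tau] is at
   least 1/64, and [F_tau] contracts the coordinates [s_j = sqrt (2 c_j)] by 3/4.
   If [x] lies outside some [Theta n], a bump at [x] is annihilated by [Q^m] on [Theta0]
   for [m >= n], so its [nu2]-integral vanishes and [x] is not in the support.
   If [x] lies in [Theta2], then for every [c] in [Theta0] the branch of [Q^M] retracing a
   preimage chain of [x] ends near [x] with weight at least [64^-M]; the [Q^n]-images of a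
   bump at [x] thus have [nu0]-integrals bounded below by a positive constant, hence so
   has the limit, the [nu2]-integral of the bump. *)

Notation triple := ('I_3 * 'I_3 * 'I_3)%type.

Definition triple_of_perm (tau : 'S_3) : triple :=
  (tau (inord 0), tau (inord 1), tau (inord 2)).

Definition distinct3 (t : triple) : bool :=
  [&& t.1.1 != t.1.2, t.1.1 != t.2 & t.1.2 != t.2].

Definition triple_fun (t : triple) (i : 'I_3) : 'I_3 :=
  if val i == 0%N then t.1.1 else if val i == 1%N then t.1.2 else t.2.

Lemma triple_fun_inj t : distinct3 t -> injective (triple_fun t).
Proof.
case: t => [[a b] c] /and3P[/= ab ac bc] [[|[|[|i]]] Hi] [[|[|[|j]]] Hj] //= E;
  apply/val_inj => //; move: ab ac bc; rewrite /triple_fun /= in E.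
all: by rewrite E eqxx.
Qed.

(* Non-distinct triples are sent to the identity, which keeps [perm_of_triple] total. *)
Lemma triple_fun_id_inj t : injective (if distinct3 t then triple_fun t else id).
Proof. by case: ifP => [/triple_fun_inj|_]. Qed.

Definition perm_of_triple (t : triple) : 'S_3 := perm (@triple_fun_id_inj t).

Lemma distinct3_triple_of_perm tau : distinct3 (triple_of_perm tau).
Proof.
by apply/and3P; split; rewrite /= (inj_eq perm_inj);
  apply/eqP => /(congr1 val); rewrite /= !inordK.
Qed.

Lemma sum_perm3 (V : nmodType) (G : triple -> V) :
  \sum_(tau : 'S_3) G (triple_of_perm tau) = \sum_(t | distinct3 t) G t.
Proof.
rewrite (reindex triple_of_perm) /=; last first.
  exists perm_of_triple => [tau _|t].
    apply/permP => i; rewrite permE distinct3_triple_of_perm /triple_fun.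
    by case: i => [[|[|[|i]]] Hi] //=; congr (tau _); apply/val_inj; rewrite /= inordK.
  rewrite inE => dt; rewrite /triple_of_perm !permE dt.
  by case: t dt => [[a b] c] dt; rewrite /triple_fun /= !inordK.
by apply: eq_bigl => tau; rewrite distinct3_triple_of_perm.
Qed.

Section Kernel.
Variable R : realType.
Implicit Types (c a b : R * R) (t : triple) (tau : 'S_3).

Lemma Theta0_setX : @Theta0 R = `[2, 8]%classic `*` `[2, 8]%classic.
Proof. by apply/seteqP; split => x /=; rewrite !in_itv. Qed.

Definition crosses (u v : 'I_3) (i : nat) : bool := (minn u v < i <= maxn u v)%N.

Definition Fi3 t c i : R :=
  (if crosses t.1.1 t.1.2 i then sj c 1 else 0) +
  (if crosses t.1.2 t.2 i then sj c 2 else 0).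

Definition w3 t c : R := 4^-1 * ((sj c 1 / Fi3 t c 1) * (sj c 2 / Fi3 t c 2)).

Lemma Fi_triple tau c i : Fi tau c i = Fi3 (triple_of_perm tau) c i.
Proof. by rewrite /Fi big_mkcond /= big_ltn // big_ltn // big_geq // addr0. Qed.

Lemma wtau_triple tau c : wtau tau c = w3 (triple_of_perm tau) c.
Proof. by rewrite /wtau big_ltn // big_ltn // big_geq // mulr1 !Fi_triple. Qed.

Lemma crosses_cover t i : distinct3 t -> (i == 1%N) || (i == 2%N) ->
  crosses t.1.1 t.1.2 i || crosses t.1.2 t.2 i.
Proof.
by case: t => [[[[|[|[|u]]] ?] [[|[|[|v]]] ?]] [[|[|[|w]]] ?]] //=;
  rewrite /distinct3 /= => _ /orP[]/eqP->.
Qed.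

Lemma sum_w3 c : 0 < sj c 1 -> 0 < sj c 2 -> \sum_(t | distinct3 t) w3 t c = 1.
Proof.
move=> s1_gt0 s2_gt0; rewrite big_mkcond /=.
rewrite -(pair_bigA _ (fun uv (w : 'I_3) => if distinct3 (uv, w) then w3 (uv, w) c else 0)).
rewrite -(pair_bigA _ (fun u v => \sum_(w < 3) if distinct3 (u, v, w) then w3 (u, v, w) c else 0)).
rewrite !big_ord_recl !big_ord0 /distinct3 /w3 /Fi3 /crosses /= ?add0r ?addr0.
by field; rewrite !gt_eqF ?addr_gt0.
Qed.

Lemma sj_Theta0 c j : Theta0 c -> 2 <= sj c j <= 4.
Proof.
move=> [/andP[? ?] /andP[? ?]].
have [lo hi] : 2 <= Defs.coord c j /\ Defs.coord c j <= 8 by rewrite /Defs.coord; case: ifP.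
have s0 := sqrtr_ge0 (2 * Defs.coord c j); have s2 := sqr_sqrtr (_ : 0 <= 2 * Defs.coord c j).
rewrite /sj; apply/andP; split; nra.
Qed.

Lemma Fi_Theta0 tau c i : Theta0 c -> (i == 1%N) || (i == 2%N) -> 2 <= Fi tau c i <= 8.
Proof.
move=> c0 i12; rewrite Fi_triple.
have := crosses_cover (distinct3_triple_of_perm tau) i12; rewrite /Fi3.
have /andP[? ?] := sj_Theta0 1 c0; have /andP[? ?] := sj_Theta0 2 c0.
by case: (crosses _ _ i); case: (crosses _ _ i) => //= _; apply/andP; split; lra.
Qed.

Lemma Ftau_Theta0 tau c : Theta0 c -> Theta0 (Ftau tau c).
Proof. by move=> c0; split; apply: Fi_Theta0. Qed.

Lemma wtau_ge0 tau c : 0 <= wtau tau c.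
Proof.
apply: mulr_ge0 => //; apply: prodr_ge0 => i _.
by apply: divr_ge0; [|apply: sumr_ge0 => j _]; apply: sqrtr_ge0.
Qed.

Lemma wtau_Theta0 tau c : Theta0 c -> 64^-1 <= wtau tau c.
Proof.
move=> c0; rewrite /wtau big_ltn // big_ltn // big_geq // mulr1.
have ratio_ge i : (i == 1%N) || (i == 2%N) -> 4^-1 <= sj c i / Fi tau c i.
  move=> i12; have /andP[? ?] := sj_Theta0 i c0; have /andP[? ?] := Fi_Theta0 tau c0 i12.
  by rewrite ler_pdivlMr; lra.
have -> : (64^-1 : R) = 4^-1 * (4^-1 * 4^-1) by field.
by apply: ler_pM => //; apply: ler_pM => //; apply: ratio_ge.
Qed.

Lemma sum_wtau c : Theta0 c -> \sum_tau wtau tau c = 1.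
Proof.
move=> c0; under eq_bigr do rewrite wtau_triple.
have /andP[? _] := sj_Theta0 1 c0; have /andP[? _] := sj_Theta0 2 c0.
by rewrite (sum_perm3 (fun t => w3 t c)) sum_w3 //; lra.
Qed.

Lemma sqrt_dist_le (L x y : R) : 0 < L -> L * L <= x -> L * L <= y ->
  `|Num.sqrt x - Num.sqrt y| <= `|x - y| / (2 * L).
Proof.
move=> L_gt0 Lx Ly.
have sqrt_ge z : L * L <= z -> 0 <= z /\ L <= Num.sqrt z.
  move=> Lz; have z0 : 0 <= z by nra.
  by have := sqrtr_ge0 z; have := sqr_sqrtr z0; rewrite expr2; split => //; nra.
have [[x0 sx] [y0 sy]] := (sqrt_ge x Lx, sqrt_ge y Ly).
have -> : x - y = (Num.sqrt x - Num.sqrt y) * (Num.sqrt x + Num.sqrt y).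
  by rewrite mulrBl !mulrDr -!expr2 !sqr_sqrtr //; ring.
rewrite normrM [`|_ + Num.sqrt y|]ger0_norm; last lra.
rewrite ler_pdivlMr; last lra.
by apply: ler_wpM2l; [exact: normr_ge0 | lra].
Qed.

Definition sdist a b : R := Num.max `|sj a 1 - sj b 1| `|sj a 2 - sj b 2|.

Lemma Fi_contract tau a b i : Theta0 a -> Theta0 b -> (i == 1%N) || (i == 2%N) ->
  `|Num.sqrt (2 * Fi tau a i) - Num.sqrt (2 * Fi tau b i)| <= 3 / 4 * sdist a b.
Proof.
move=> a0 b0 i12; set d := sdist a b.
(* [2 * Fi >= 4] always, and [2 * Fi >= 8 >= (8/3)^2] when both edges cross level [i]. *)
have contract (L u v : R) : 0 < L -> L * L <= 2 * u -> L * L <= 2 * v ->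
    `|u - v| <= 3 / 4 * L * d -> `|Num.sqrt (2 * u) - Num.sqrt (2 * v)| <= 3 / 4 * d.
  move=> L_gt0 Lu Lv uv; apply: le_trans (sqrt_dist_le L_gt0 Lu Lv) _.
  by rewrite -mulrBr normrM ger0_norm // ler_pdivrMr; nra.
have [d1 d2] : `|sj a 1 - sj b 1| <= d /\ `|sj a 2 - sj b 2| <= d.
  by rewrite !le_max !lexx orbT.
rewrite !ler_norml in d1 d2; case/andP: d1 => ? ?; case/andP: d2 => ? ?.
have /andP[? ?] := sj_Theta0 1 a0; have /andP[? ?] := sj_Theta0 2 a0.
have /andP[? ?] := sj_Theta0 1 b0; have /andP[? ?] := sj_Theta0 2 b0.
have := crosses_cover (distinct3_triple_of_perm tau) i12; rewrite !Fi_triple /Fi3.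
case: (crosses _ _ i); case: (crosses _ _ i) => //= _; rewrite ?addr0 ?add0r.
- by apply: (contract (8 / 3)); rewrite ?ler_norml; lra.
- by apply: (contract 2); rewrite ?ler_norml; lra.
- by apply: (contract 2); rewrite ?ler_norml; lra.
Qed.

Lemma sdist_Ftau tau a b : Theta0 a -> Theta0 b ->
  sdist (Ftau tau a) (Ftau tau b) <= 3 / 4 * sdist a b.
Proof. by move=> a0 b0; rewrite ge_max !Fi_contract. Qed.

Lemma sdist_Theta0 a b : Theta0 a -> Theta0 b -> sdist a b <= 2.
Proof.
move=> a0 b0.
have /andP[? ?] := sj_Theta0 1 a0; have /andP[? ?] := sj_Theta0 2 a0.
have /andP[? ?] := sj_Theta0 1 b0; have /andP[? ?] := sj_Theta0 2 b0.
by rewrite ge_max !ler_norml; apply/andP; split; apply/andP; split; lra.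
Qed.

Lemma coord_dist_le a b j : Theta0 a -> Theta0 b ->
  `|Defs.coord a j - Defs.coord b j| <= 4 * `|sj a j - sj b j|.
Proof.
move=> a0 b0; have sq c : Theta0 c -> Defs.coord c j = sj c j ^+ 2 / 2.
  move=> [/andP[? ?] /andP[? ?]]; rewrite /sj sqr_sqrtr; first by field.
  by rewrite /Defs.coord; case: ifP => _; lra.
rewrite (sq a a0) (sq b b0) -mulrBl.
rewrite (_ : _ ^+ 2 - _ = (sj a j - sj b j) * (sj a j + sj b j)); last by ring.
have /andP[? ?] := sj_Theta0 j a0; have /andP[? ?] := sj_Theta0 j b0.
have sum_ge0 : 0 <= sj a j + sj b j by lra.
rewrite !normrM (ger0_norm sum_ge0) (@ger0_norm _ 2^-1) //.
by have := normr_ge0 (sj a j - sj b j); nra.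
Qed.

Lemma sdist_ball a b (r : R) : Theta0 a -> Theta0 b -> 4 * sdist a b < r -> ball b r a.
Proof.
move=> a0 b0 lt_r; have le_sdist j : `|sj a j - sj b j| <= sdist a b ->
    `|Defs.coord b j - Defs.coord a j| < r.
  by move=> ?; rewrite distrC; apply: le_lt_trans (coord_dist_le j a0 b0) _; lra.
by split; [apply: (le_sdist 1%N) | apply: (le_sdist 2%N)]; rewrite le_max lexx ?orbT.
Qed.

Implicit Types (f : R * R -> R) (n m : nat).

Lemma Qop_ge0 f : (forall x, 0 <= f x) -> forall c, 0 <= Qop f c.
Proof. by move=> f0 c; apply: sumr_ge0 => tau _; rewrite mulr_ge0 ?wtau_ge0. Qed.

Lemma Qpow_ge0 n f : (forall x, 0 <= f x) -> forall c, 0 <= Qpow n f c.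
Proof. by move=> f0; elim: n => [|n IH] c; [exact: f0 | exact: (Qop_ge0 IH)]. Qed.

Lemma Qpow_ge n f (eta : R) : (forall x, Theta0 x -> eta <= f x) ->
  forall c, Theta0 c -> eta <= Qpow n f c.
Proof.
move=> f_ge; elim: n => [|n IH] c c0; first exact: f_ge.
rewrite /Qpow iterS /Qop -[eta]mul1r -(sum_wtau c0) mulr_suml.
apply: ler_sum => tau _; apply: ler_wpM2l; first exact: wtau_ge0.
exact/IH/Ftau_Theta0.
Qed.

Lemma Qop_ge_term f tau c : (forall x, 0 <= f x) ->
  wtau tau c * f (Ftau tau c) <= Qop f c.
Proof.
move=> f0; rewrite /Qop (bigD1 tau) //= lerDl.
by apply: sumr_ge0 => s _; rewrite mulr_ge0 ?wtau_ge0.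
Qed.

Lemma Theta_sub_Theta0 n : Theta n `<=` @Theta0 R.
Proof. elim: n => [//|n IH] _ [tau _ [c /IH c0 <-]]; exact: Ftau_Theta0. Qed.

Lemma Theta_succ_sub n : Theta n.+1 `<=` @Theta R n.
Proof.
elim: n => [|n IH] _ [tau _ [c c_in <-]]; first exact: Ftau_Theta0.
by exists tau => //; exists c => //; apply: IH.
Qed.

Lemma Theta_decr n m : (n <= m)%N -> Theta m `<=` @Theta R n.
Proof.
move=> /subnK <-; elim: (m - n)%N => [//|k IH].
exact: subset_trans (@Theta_succ_sub _) IH.
Qed.

Lemma Qpow_eq0 m f n : (forall x, Theta (n + m) x -> f x = 0) ->
  forall c, Theta n c -> Qpow m f c = 0.
Proof.
elim: m n => [|m IH] n f0 c cn; first by apply: f0; rewrite addn0.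
rewrite /Qpow iterS -/(Qpow m f); apply: big1 => tau _.
rewrite (IH n.+1) ?mulr0 //; first by move=> x; rewrite addSnnS; exact: f0.
by exists tau => //; exists c.
Qed.

(* Follow the branch of [Q^n] that retraces how [x] arose from [Theta0]: each step keeps
   a weight at least 1/64 and contracts [sdist] by 3/4. *)
Lemma Qpow_ge_orbit n f x c : (forall y, 0 <= f y) -> Theta n x -> Theta0 c ->
  exists z, [/\ Theta0 z, sdist z x <= 2 * (3 / 4) ^+ n &
                (64^-1) ^+ n * f z <= Qpow n f c].
Proof.
elim: n f x => [|n IH] f x f0 xn c0.
  by exists c; rewrite expr0 mulr1 mul1r sdist_Theta0.
case: xn => tau _ [y yn <-].
have [z [z0 zy le_Qz]] := IH (Qop f) y (Qop_ge0 f0) yn c0.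
exists (Ftau tau z); split; first exact: Ftau_Theta0.
  rewrite exprS mulrCA; apply: le_trans (sdist_Ftau _ z0 (Theta_sub_Theta0 yn)) _.
  by rewrite ler_wpM2l.
rewrite /Qpow iterSr; apply: le_trans le_Qz.
rewrite exprSr -mulrA ler_wpM2l ?exprn_ge0 //.
apply: le_trans (Qop_ge_term _ _ f0).
by apply: ler_wpM2r; [exact: f0 | exact: wtau_Theta0].
Qed.

End Kernel.

Section Topology.
Variable R : realType.

Lemma sj_continuous j : continuous (fun c : R * R => sj c j).
Proof.
move=> c; rewrite /sj /Defs.coord; case: (j == 1%N).
- apply: (continuous_comp (f := fun c : R * R => 2 * c.1)); last exact: sqrt_continuous.
  by apply: cvgM; [exact: cvg_cst | exact: cvg_fst].
- apply: (continuous_comp (f := fun c : R * R => 2 * c.2)); last exact: sqrt_continuous.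
  by apply: cvgM; [exact: cvg_cst | exact: cvg_snd].
Qed.

Lemma Ftau_continuous tau : continuous (@Ftau R tau).
Proof.
have Fi_cont i : continuous (fun c : R * R => Fi tau c i).
  move=> c; under eq_fun do rewrite Fi_triple.
  by apply: cvgD; (case: ifP => _; [exact: sj_continuous | exact: cvg_cst]).
move=> c; apply: (@cvg_pair _ _ _ _ (nbhs (Fi tau c 1)) (nbhs (Fi tau c 2)));
  exact: Fi_cont.
Qed.

Lemma Theta_compact n : compact (@Theta R n).
Proof.
elim: n => [|n IH] /=.
  by rewrite Theta0_setX; apply: compact_setX; exact: segment_compact.
rewrite (_ : [set: 'S_3] = [set` enum 'S_3]); last first.
  by apply/seteqP; split => tau //= _; rewrite mem_enum.
rewrite bigcup_seq; apply: bigsetU_compact => tau _.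
by apply: continuous_compact => //; apply: continuous_subspaceT; exact: Ftau_continuous.
Qed.

Lemma Theta_closed n : closed (@Theta R n).
Proof. by apply: compact_closed; [exact: norm_hausdorff | exact: Theta_compact]. Qed.

End Topology.

Section Integral.
Context d (T : measurableType d) (R : realType) (mu : {measure set T -> \bar R}).
Local Open Scope ereal_scope.

(* Nonnegative integrals are suprema of integrals of simple functions below the integrand,
   so they are monotone even without measurability. *)
Lemma ge0_le_integral_nonmeas (f g : T -> \bar R) :
  (forall x, 0 <= f x) -> (forall x, f x <= g x) ->
  \int[mu]_x f x <= \int[mu]_x g x.
Proof.
move=> f0 fg; have g0 x : 0 <= g x by apply: le_trans (fg x).
rewrite !ge0_integralTE //; apply: ereal_sup_le => _ [h hf <-].
by exists h => // x; exact: le_trans (hf x) (fg x).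
Qed.

Lemma mul_measure_le_integral (A : set T) (eta : R) (f : T -> R) :
  measurable A -> (0 <= eta)%R -> (forall x, 0 <= f x)%R ->
  (forall x, A x -> eta <= f x)%R -> eta%:E * mu A <= \int[mu]_x (f x)%:E.
Proof.
move=> mA eta0 f0 f_ge.
have <- : \int[mu]_x (eta * \1_A x)%:E = eta%:E * mu A.
  rewrite (@integralZl_indic _ _ _ mu setT measurableT (fun _ => A) eta) //.
    by rewrite integral_indic // setIT.
  by rewrite ltNge eta0.
apply: ge0_le_integral_nonmeas => x; rewrite lee_fin indicE.
  by rewrite mulr_ge0.
by have [/set_mem/f_ge|_] := boolP (x \in A); rewrite ?mulr1 ?mulr0.
Qed.

Lemma ge0_integral_eq0_conull (A : set T) (f : T -> R) :
  measurable A -> mu (~` A) = 0 -> (forall x, 0 <= f x)%R ->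
  (forall x, A x -> f x = 0%R) -> \int[mu]_x (f x)%:E = 0.
Proof.
move=> mA nullAC f0 f_eq0; apply/eqP; rewrite eq_le integral_ge0 ?andbT; last first.
  by move=> x _; rewrite lee_fin.
have f_le : forall x, (f x)%:E <= ((cst +oo) \_ (~` A)) x.
  move=> x; rewrite /patch; case: ifP => [_|]; first exact: leey.
  by rewrite in_setC => /negbFE /set_mem /f_eq0 ->.
apply: le_trans (ge0_le_integral_nonmeas _ f_le) _; first by move=> x; rewrite lee_fin.
by rewrite -integral_mkcond integral_cst ?nullAC ?mule0 //; exact: measurableC.
Qed.

End Integral.

Section Plane.
Variable R : realType.
Implicit Types (x y : R * R) (r : R).

Definition rat_box (q : rat * rat * rat) : set (R * R) :=
  `](ratr q.1.1 - ratr q.2), (ratr q.1.1 + ratr q.2)[%classic `*`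
  `](ratr q.1.2 - ratr q.2), (ratr q.1.2 + ratr q.2)[%classic.

(* An open set is the countable union of the rational boxes it contains. *)
Lemma open_measurable_pair (U : set (R * R)) : open U -> measurable U.
Proof.
move=> oU; pose G q := if pselect (rat_box q `<=` U) then rat_box q else set0.
have -> : U = \bigcup_q G q.
  apply/seteqP; split => [y Uy|y [q _]]; last by rewrite /G; case: pselect => // qU /qU.
  have /nbhs_ballP[e /= e0 yeU] : nbhs y U by rewrite nbhsE /=; exists U.
  have /rat_in_itvoo[rho] : e / 4 < e / 2 by lra.
  have /rat_in_itvoo[q1] : y.1 - e / 4 < y.1 + e / 4 by lra.
  have /rat_in_itvoo[q2] : y.2 - e / 4 < y.2 + e / 4 by lra.
  rewrite !in_itv /= => /andP[? ?] /andP[? ?] /andP[? ?].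
  exists (q1, q2, rho) => //; rewrite /G; case: pselect => [sub|nsub].
    by split; rewrite /= in_itv /=; apply/andP; split; lra.
  apply: nsub => z [] /=; rewrite !in_itv /= => /andP[? ?] /andP[? ?].
  by apply: yeU; split; rewrite /ball /= ltr_norml; apply/andP; split; lra.
apply: countable_bigcupT_measurable; first exact: countableP.
move=> q; rewrite /G; case: pselect => sub; last exact: measurable0.
by apply: measurableX; exact: measurable_itv.
Qed.

Definition bump x r y : R :=
  Num.max 0 (1 - Num.max `|y.1 - x.1| `|y.2 - x.2| / r).

Lemma bump_continuous x r : continuous (bump x r).
Proof.
move=> y; apply: (@continuous_max _ _ (fun _ => 0)
  (fun y => 1 - Num.max `|y.1 - x.1| `|y.2 - x.2| / r)); first exact: cvg_cst.
apply: cvgB; first exact: cvg_cst.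
apply: cvgM; last exact: cvg_cst.
apply: (@continuous_max _ _ (fun y : R * R => `|y.1 - x.1|) (fun y => `|y.2 - x.2|));
  apply: cvg_norm; apply: cvgB; by [exact: cvg_fst | exact: cvg_snd | exact: cvg_cst].
Qed.

Lemma bump_ge0 x r y : 0 <= bump x r y.
Proof. by rewrite /bump le_max lexx. Qed.

Lemma bump_le1 x r y : 0 < r -> bump x r y <= 1.
Proof.
move=> r_gt0; rewrite /bump ge_max ler01 lerBlDr lerDl.
by rewrite divr_ge0 ?le_max ?normr_ge0 ?ltW.
Qed.

Lemma bump_out x r y : 0 < r -> ~ ball x r y -> bump x r y = 0.
Proof.
move=> r_gt0 y_out; apply/eqP; rewrite eq_le bump_ge0 andbT /bump ge_max lexx /=.
rewrite subr_le0 ler_pdivlMr // mul1r le_max.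
case: (leP r `|y.1 - x.1|) => //= x1; rewrite leNgt; apply/negP => x2.
by apply: y_out; split; rewrite /ball /= distrC.
Qed.

Lemma bump_ge_half x r y : 0 < r -> ball x (r / 2) y -> 1 / 2 <= bump x r y.
Proof.
move=> r_gt0 [/ltW y1 /ltW y2]; rewrite /bump le_max; apply/orP; right.
rewrite /ball /= distrC in y1; rewrite /ball /= distrC in y2.
have : Num.max `|y.1 - x.1| `|y.2 - x.2| / r <= 1 / 2.
  by rewrite ler_pdivrMr // ge_max; apply/andP; split; apply: le_trans (_ : r / 2 <= _); lra.
lra.
Qed.

Lemma bump_bdd_cont x r : 0 < r -> bdd_cont (bump x r).
Proof.
move=> r_gt0; split; first exact: bump_continuous.
by exists 1 => y; rewrite ger0_norm ?bump_ge0 ?bump_le1.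
Qed.

End Plane.

Section Support.
Variables (R : realType) (nu0 nu2 : probability (R * R)%type R).
Hypotheses (nu0_Theta0 : nu0 (~` @Theta0 R) = 0%E) (nu0Q_cvg : weak_lim_Qn nu0 nu2).
Local Open Scope ereal_scope.

Lemma measurable_Theta0 : measurable (@Theta0 R).
Proof. by rewrite Theta0_setX; apply: measurableX; exact: measurable_itv. Qed.

Lemma nu0_Theta0_eq1 : nu0 (@Theta0 R) = 1.
Proof.
rewrite -(probability_setT nu0) -(setUv (@Theta0 R)) measureU.
- by rewrite -[LHS]adde0; congr (_ + _); apply/esym; exact: nu0_Theta0.
- exact: measurable_Theta0.
- by apply: measurableC; exact: measurable_Theta0.
- by rewrite setICr.
Qed.

Lemma msupport_sub_Theta2 : msupport nu2 `<=` @Theta2 R.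
Proof.
move=> x x_supp n _; apply: contrapT => x_out.
have /nbhs_ballP[e /= e_gt0 ball_out] : nbhs x (~` @Theta R n).
  by apply: open_nbhs_nbhs; split => //; apply: closed_openC; exact: Theta_closed.
pose f := bump x e; have f0 y : (0 <= f y)%R by exact: bump_ge0.
have Qf_eq0 : \forall m \near \oo, \int[nu0]_y (Qpow m f y)%:E = 0.
  near=> m; apply: (ge0_integral_eq0_conull measurable_Theta0 nu0_Theta0).
    exact: Qpow_ge0.
  move=> c c0; apply: (Qpow_eq0 (n := 0%N)) c0 => y y_in.
  apply: bump_out => // /ball_out; apply; apply: Theta_decr y_in.
  by near: m; exists n.
have int_f_eq0 : \int[nu2]_y (f y)%:E = 0.
  have Qf_cvg0 := cvg_near_cst _ Qf_eq0 (FF := eventually_filter).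
  by rewrite -(cvg_lim _ (nu0Q_cvg (bump_bdd_cont x e_gt0))) // (cvg_lim _ Qf_cvg0).
have half_le : (1 / 2)%:E * nu2 (ball x (e / 2)) <= \int[nu2]_y (f y)%:E.
  apply: mul_measure_le_integral => //.
  - by apply: open_measurable_pair; apply: ball_open; lra.
  - by move=> y; apply: bump_ge_half.
have ball_pos : 0 < nu2 (ball x (e / 2)).
  by apply: x_supp; [exact: ball_open | apply: ballxx; lra].
by move: half_le; rewrite int_f_eq0 leNgt mule_gt0 // lte_fin; lra.
Unshelve. all: by end_near.
Qed.

Lemma Qpow_bump_ge x e : (forall m, Theta m x) -> (0 < e)%R ->
  exists M (eta : R), (0 < eta)%R /\
    forall n, (M <= n)%N -> forall c, Theta0 c -> (eta <= Qpow n (bump x e) c)%R.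
Proof.
move=> x_Theta e_gt0; have f0 y : (0 <= bump x e y)%R by exact: bump_ge0.
have [M M_small] : exists M, ((3 / 4 : R) ^+ M < e / 16)%R.
  have norm_lt1 : (`|3 / 4 : R| < 1)%R by rewrite ger0_norm; lra.
  have [N _ N_small] := cvgr0_norm_lt _ (cvg_expr norm_lt1) (e / 16)%R ltac:(lra).
  by exists N; move: (N_small N (leqnn N)); rewrite /= ger0_norm // exprn_ge0 //; lra.
exists M, ((64^-1) ^+ M / 2)%R; split; first by rewrite divr_gt0 // exprn_gt0.
have QMf_ge c : Theta0 c -> ((64^-1) ^+ M / 2 <= Qpow M (bump x e) c)%R.
  move=> c0; have [z [z0 zx le_Qz]] := Qpow_ge_orbit f0 (x_Theta M) c0.
  apply: le_trans le_Qz; rewrite ler_wpM2l ?exprn_ge0 // -[X in (X <= _)%R]mul1r.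
  apply: bump_ge_half => //; apply: sdist_ball z0 (Theta_sub_Theta0 (x_Theta M)) _.
  lra.
move=> n le_Mn c c0; rewrite /Qpow -(subnK le_Mn) iterD.
exact: Qpow_ge QMf_ge c c0.
Qed.

Lemma Theta2_sub_msupport : @Theta2 R `<=` msupport nu2.
Proof.
move=> x x_in U oU Ux; have x_Theta m : Theta m x by exact: x_in.
have /nbhs_ballP[e /= e_gt0 ball_U] : nbhs x U by apply: open_nbhs_nbhs.
pose f := bump x e; have f0 y : (0 <= f y)%R by exact: bump_ge0.
have [M [eta [eta_gt0 Qf_ge]]] := Qpow_bump_ge x_Theta e_gt0.
have int_ge n : (M <= n)%N -> eta%:E <= \int[nu0]_y (Qpow n f y)%:E.
  move=> le_Mn; rewrite -[eta%:E]mule1 -nu0_Theta0_eq1.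
  apply: mul_measure_le_integral => //; [exact: measurable_Theta0 | exact: ltW | |].
    exact: Qpow_ge0.
  by move=> c; apply: Qf_ge.
have f_le_U : \int[nu2]_y (f y)%:E <= nu2 U.
  have f_le_indic y : (f y)%:E <= (\1_U y)%:E.
    rewrite lee_fin indicE; have [/set_mem Uy|yU] := boolP (y \in U).
      exact: bump_le1.
    by rewrite /f bump_out // => /ball_U /mem_set; rewrite (negbTE yU).
  apply: le_trans (ge0_le_integral_nonmeas nu2 _ f_le_indic) _; first by move=> y; rewrite lee_fin.
  by rewrite integral_indic ?setIT //; exact: open_measurable_pair.
have eta_le : eta%:E <= \int[nu2]_y (f y)%:E.
  have f_cvg := nu0Q_cvg (bump_bdd_cont x e_gt0).
  rewrite -(cvg_lim _ f_cvg) //; apply: lime_ge; first by apply/cvg_ex; eexists; exact: f_cvg.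
  by near=> n; apply: int_ge; near: n; exists M.
by apply: lt_le_trans f_le_U; apply: lt_le_trans eta_le; rewrite lte_fin.
Unshelve. all: by end_near.
Qed.

End Support.

Theorem lemma2 (R : realType) (nu0 nu2 : probability (R * R)%type R) :
  nu0 (~` @Theta0 R) = 0%E ->
  weak_lim_Qn nu0 nu2 ->
  @Theta2 R = msupport nu2.
Proof.
move=> nu0_Theta0 nu0Q_cvg; apply/seteqP; split.
- exact: (Theta2_sub_msupport nu0_Theta0 nu0Q_cvg).
- exact: (msupport_sub_Theta2 nu0_Theta0 nu0Q_cvg).
Qed.
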